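(* Let $0\le q\in L_1^{loc}(\mathbb{R})$ and assume there is $a\in(0,\infty)$ with $\inf_{x\in\mathbb{R}}\int_{x-a}^{x+a}q(t)\,dt>0$. For $\lambda\in(0,\infty)$ set $$I_1(x)=\int_x^\infty e^{-\int_x^t(q(\xi)+\lambda)d\xi}dt,\qquad I_2(x)=\int_{-\infty}^x e^{-\int_t^x(q(\xi)+\lambda)d\xi}dt.$$ Then there exist $\delta_1(\lambda)>0$ and $\delta_2(\lambda)>0$ such that $$\sup_{x\in\mathbb{R}}I_1(x)=\frac{1}{\lambda+\delta_1(\lambda)},\qquad\sup_{x\in\mathbb{R}}I_2(x)=\frac{1}{\lambda+\delta_2(\lambda)}.$$ *)

From HB Require Import structures.
From mathcomp Require Import all_boot all_order all_algebra.
From mathcomp Require Import all_classical all_reals all_analysis.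
Set Implicit Arguments. Unset Strict Implicit. Unset Printing Implicit Defensive.
Import Order.TTheory GRing.Theory Num.Theory.
Local Open Scope classical_set_scope.
Local Open Scope ring_scope.

Definition I1 {R : realType} (q : R -> R) (lam : R) (x : R) : \bar R :=
  (\int[@lebesgue_measure R]_(t in `[x, +oo[)
     (expR (- Rintegral (@lebesgue_measure R) `[x, t] (fun xi => q xi + lam)))%:E)%E.

Definition I2 {R : realType} (q : R -> R) (lam : R) (x : R) : \bar R :=
  (\int[@lebesgue_measure R]_(t in `]-oo, x])
     (expR (- Rintegral (@lebesgue_measure R) `[t, x] (fun xi => q xi + lam)))%:E)%E.

From HB Require Import structures.
From mathcomp Require Import all_boot all_order all_algebra.
From mathcomp Require Import all_classical all_reals all_analysis.
From mathcomp Require Import measurable_realfun ring lra.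
Import Order.TTheory GRing.Theory Num.Theory.
Import numFieldTopology.Exports.

Set Implicit Arguments.
Unset Strict Implicit.
Unset Printing Implicit Defensive.

Local Open Scope classical_set_scope.
Local Open Scope ring_scope.

(* Write Q(x, t) for the integral of q + lam over [x, t]; since q >= 0,
   Q(x, t) >= lam (t - x), so the kernel exp(-Q(x, t)) of I_1 is at most
   exp(-lam (t - x)), and from t = x + 2a on it gains the factor exp(-m), where
   m > 0 is a lower bound for the integrals of q over intervals of length 2a.
   Integrating these exponential bounds gives
   I_1(x) <= (1 - (1 - exp(-m)) exp(-2 a lam)) / lam < 1 / lam uniformly in x,
   while I_1 is bounded below by a positive constant at x = 0; hence
   sup I_1 = 1 / (lam + d_1) with d_1 > 0. I_2 is the mirror image. *)

Section lebesgue_itv.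
Context {R : realType}.
Notation mu := (@lebesgue_measure R).

Lemma lebesgue_measure_itvcc (x t : R) : x <= t -> mu `[x, t] = (t - x)%:E.
Proof.
move=> xt; rewrite /reverse_coercion lebesgue_measure_itv/= lte_fin.
by case: ltgtP xt => // <-; rewrite subrr.
Qed.

Lemma locally_integrable_cst (k : R) : locally_integrable setT (fun _ : R => k).
Proof.
split => //; first exact: openT.
move=> K _ cK; rewrite integral_cst//=; last exact: compact_measurable.
by rewrite lte_mul_pinfty//; exact: compact_finite_measure.
Qed.

Lemma locally_integrable_integrable_itvcc {f : R -> R} :
  locally_integrable setT f -> forall u v : R, mu.-integrable `[u, v] (EFin \o f).
Proof.
move=> [mf _ fi] u v; apply/integrableP; split.
  by apply/measurable_EFinP; exact: measurable_funS mf.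
by apply: fi => //; exact: segment_compact.
Qed.

Lemma Rintegral_itvcc_addr (f : R -> R) (k x t : R) :
  locally_integrable setT f -> x <= t ->
  Rintegral mu `[x, t] (fun y => f y + k) = Rintegral mu `[x, t] f + k * (t - x).
Proof.
move=> floc xt; rewrite RintegralD//.
- (* [mu] occurs under a measure coercion here, hence the pattern *)
  by rewrite Rintegral_cst// [X in fine X]lebesgue_measure_itvcc.
- exact: locally_integrable_integrable_itvcc.
- exact/locally_integrable_integrable_itvcc/locally_integrable_cst.
Qed.

Lemma ge0_subset_Rintegral_itvcc (f : R -> R) (a b c d : R) :
  (forall x, 0 <= f x) -> locally_integrable setT f -> c <= a -> b <= d ->
  Rintegral mu `[a, b] f <= Rintegral mu `[c, d] f.
Proof.
move=> f0 floc ca bd; have fi := locally_integrable_integrable_itvcc floc c d.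
rewrite /Rintegral fine_le//.
- exact/integrable_fin_num/locally_integrable_integrable_itvcc.
- exact: integrable_fin_num.
- apply: ge0_subset_integral => //.
  + by case/integrableP: fi.
  + by move=> x _; rewrite lee_fin.
  + by apply: subset_itv; rewrite bnd_simp.
Qed.

Lemma ge0_integral_itv_split (f : R -> \bar R) (a c b : itv_bound R) :
  (a <= c)%O -> (c <= b)%O -> measurable_fun [set` Interval a b] f ->
  (forall t, [set` Interval a b] t -> (0 <= f t)%E) ->
  (\int[mu]_(t in [set` Interval a b]) f t =
   \int[mu]_(t in [set` Interval a c]) f t + \int[mu]_(t in [set` Interval c b]) f t)%E.
Proof.
move=> ac cb; rewrite (itv_bndbnd_setU ac cb) => mf f0.
apply: ge0_integral_setU => //.
by rewrite /disj_set -set_itvI /Order.meet/= (join_r ac) (meet_l cb) set_itvxx.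
Qed.

End lebesgue_itv.

Section exponential_integrals.
Context {R : realType}.
Notation mu := (@lebesgue_measure R).

Lemma continuous_expR_affine (k x : R) : continuous (fun t : R => expR (k * (t - x))).
Proof.
move=> t; apply: continuous_comp; last exact: continuous_expR.
apply: continuousM; first exact: cst_continuous.
by apply: continuousB => //; exact: cst_continuous.
Qed.

Lemma measurable_expR_affine (k x : R) (D : set R) :
  measurable_fun D (fun t => (expR (k * (t - x)))%:E).
Proof.
apply/measurable_EFinP; apply: measurable_funTS.
by apply: continuous_measurable_fun; exact: continuous_expR_affine.
Qed.

Lemma derive1_expR_affine (k x t : R) :
  (fun t => expR (k * (t - x)))^`()%classic t = k * expR (k * (t - x)).
Proof.
rewrite derive1_comp// !derive1E !derive_val subr0 mulrC.
by congr (_ * _); exact: mulr1.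
Qed.

Lemma integral_expR_itvcy (l x u : R) : 0 < l ->
  (\int[mu]_(t in `[u, +oo[) (expR (- l * (t - x)))%:E =
   (expR (- l * (u - x)) / l)%:E)%E.
Proof.
move=> l0; set e := fun t => expR (- l * (t - x)).
rewrite (@ge0_continuous_FTC2y _ _ (fun t => - l^-1 * e t) _ 0)//.
- by rewrite -EFinB sub0r mulNr opprK mulrC.
- exact/continuous_subspaceT/continuous_expR_affine.
- rewrite -(mulr0 (- l^-1)); apply: cvgMr.
  under eq_cvg do rewrite /e mulNr.
  apply: (@cvg_comp _ _ _ (fun t => l * (t - x)) (fun z => expR (- z)) _
    (pinfty_nbhs R)); last exact: cvgr_expR.
  exact/gt0_cvgMry/cvg_addrr.
- by apply: cvg_at_right_filter; apply: cvgMr; exact: continuous_expR_affine.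
- move=> t _; rewrite (derive1Ml (f := e)); last exact: ex_derive.
  by rewrite derive1_expR_affine mulrA mulrNN mulVf ?gt_eqF// mul1r.
Qed.

Lemma integral_expR_itvNyc (l x u : R) : 0 < l ->
  (\int[mu]_(t in `]-oo, u]) (expR (l * (t - x)))%:E =
   (expR (l * (u - x)) / l)%:E)%E.
Proof.
move=> l0; rewrite -[u]opprK ge0_integration_by_substitutionNy; first last.
- by move=> t _; exact: expR_ge0.
- exact/continuous_subspaceT/continuous_expR_affine.
transitivity (\int[mu]_(t in `[(- u)%R, +oo[) (expR (- l * (t - - x)))%:E)%E.
  by apply: eq_integral => t _; congr (EFin (expR _)); rewrite /=; ring.
by rewrite integral_expR_itvcy//; congr (EFin (expR _ / _)); ring.
Qed.

Lemma integral_expR_itvco (l x u v : R) : 0 < l -> u <= v ->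
  (\int[mu]_(t in `[u, v[) (expR (- l * (t - x)))%:E =
   ((expR (- l * (u - x)) - expR (- l * (v - x))) / l)%:E)%E.
Proof.
move=> l0 uv.
have := integral_expR_itvcy x u l0.
rewrite (ge0_integral_itv_split (c := BLeft v)) ?bnd_simp//;
  last exact: measurable_expR_affine.
rewrite integral_expR_itvcy//.
move=> /(congr1 (fun z => z - (expR (- l * (v - x)) / l)%:E)%E).
by rewrite addeK// -EFinB mulrBl => <-.
Qed.

Lemma integral_expR_itvoc (l x v u : R) : 0 < l -> v <= u ->
  (\int[mu]_(t in `]v, u]) (expR (l * (t - x)))%:E =
   ((expR (l * (u - x)) - expR (l * (v - x))) / l)%:E)%E.
Proof.
move=> l0 vu.
have := integral_expR_itvNyc x u l0.
rewrite (ge0_integral_itv_split (c := BRight v)) ?bnd_simp//;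
  last exact: measurable_expR_affine.
rewrite integral_expR_itvNyc//.
move=> /(congr1 (fun z => z - (expR (l * (v - x)) / l)%:E)%E).
by rewrite addeC addeK// -EFinB mulrBl => <-.
Qed.

Lemma ge0_integral_itvcy_le_expR (h : R -> R) (l c s u : R) :
  0 < l -> 0 <= c -> 0 <= s -> measurable_fun `[u, +oo[ h ->
  (forall t, u <= t -> 0 <= h t <= expR (- l * (t - u))) ->
  (forall t, u + s <= t -> h t <= c * expR (- l * (t - u))) ->
  (\int[mu]_(t in `[u, +oo[) (h t)%:E <=
   ((1 - (1 - c) * expR (- l * s)) / l)%:E)%E.
Proof.
move=> l0 c0 s0 mh hle htail.
have us : u <= u + s by rewrite lerDl.
have mhE : measurable_fun `[u, +oo[ (EFin \o h) by exact/measurable_EFinP.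
rewrite (ge0_integral_itv_split (c := BLeft (u + s))) ?bnd_simp//; last first.
  by move=> t /=; rewrite in_itv/= andbT lee_fin => /hle/andP[].
have head : (\int[mu]_(t in `[u, (u + s)%R[) (h t)%:E <=
             \int[mu]_(t in `[u, (u + s)%R[) (expR (- l * (t - u)))%:E)%E.
  apply: ge0_le_integral => //.
  - by move=> t; rewrite /= in_itv/= lee_fin => /andP[/hle/andP[]].
  - by apply: measurable_funS mhE => //; exact: subset_itvl.
  - exact: measurable_expR_affine.
  - by move=> t; rewrite /= in_itv/= lee_fin => /andP[/hle/andP[]].
have tail : (\int[mu]_(t in `[(u + s)%R, +oo[) (h t)%:E <=
             \int[mu]_(t in `[(u + s)%R, +oo[)
               (c%:E * (expR (- l * (t - u)))%:E))%E.
  apply: ge0_le_integral => //.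
  - by move=> t; rewrite /= in_itv/= andbT lee_fin => /(le_trans us)/hle/andP[].
  - by apply: measurable_funS mhE => //; exact: subset_itvr.
  - by apply: measurable_funeM; exact: measurable_expR_affine.
  - by move=> t; rewrite /= in_itv/= andbT -EFinM lee_fin => /htail.
rewrite integral_expR_itvco// subrr mulr0 expR0 addrAC subrr add0r in head.
rewrite ge0_integralZl_EFin// in tail; last exact: measurable_expR_affine.
rewrite integral_expR_itvcy// addrAC subrr add0r in tail.
by apply: le_trans (leeD head tail) _; rewrite -EFinM -EFinD lee_fin; lra.
Qed.

Lemma ge0_integral_itvNyc_le_expR (h : R -> R) (l c s u : R) :
  0 < l -> 0 <= c -> 0 <= s -> measurable_fun `]-oo, u] h ->
  (forall t, t <= u -> 0 <= h t <= expR (l * (t - u))) ->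
  (forall t, t <= u - s -> h t <= c * expR (l * (t - u))) ->
  (\int[mu]_(t in `]-oo, u]) (h t)%:E <=
   ((1 - (1 - c) * expR (- l * s)) / l)%:E)%E.
Proof.
move=> l0 c0 s0 mh hle htail.
have su : u - s <= u by rewrite lerBlDr lerDl.
have mhE : measurable_fun `]-oo, u] (EFin \o h) by exact/measurable_EFinP.
have us_s : l * (u - s - u) = - l * s by rewrite addrAC subrr add0r mulrN mulNr.
rewrite (ge0_integral_itv_split (c := BRight (u - s))) ?bnd_simp//; last first.
  by move=> t /=; rewrite in_itv/= lee_fin => /hle/andP[].
have tail : (\int[mu]_(t in `]-oo, (u - s)%R]) (h t)%:E <=
             \int[mu]_(t in `]-oo, (u - s)%R])
               (c%:E * (expR (l * (t - u)))%:E))%E.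
  apply: ge0_le_integral.
  - exact: measurable_itv.
  - by move=> t /= /[!in_itv]/= /le_trans/(_ su)/hle/andP[]; rewrite lee_fin.
  - by apply: measurable_funS mhE => //; exact: subset_itvl.
  - by apply: measurable_funeM; exact: measurable_expR_affine.
  - by move=> t /= /[!in_itv]/= /htail; rewrite -EFinM lee_fin.
have head : (\int[mu]_(t in `](u - s)%R, u]) (h t)%:E <=
             \int[mu]_(t in `](u - s)%R, u]) (expR (l * (t - u)))%:E)%E.
  apply: ge0_le_integral => //.
  - by move=> t; rewrite /= in_itv/= lee_fin => /andP[_ /hle/andP[]].
  - by apply: measurable_funS mhE => //; exact: subset_itvr.
  - exact: measurable_expR_affine.
  - by move=> t; rewrite /= in_itv/= lee_fin => /andP[_ /hle/andP[]].
rewrite ge0_integralZl_EFin// in tail; last exact: measurable_expR_affine.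
rewrite integral_expR_itvNyc// us_s in tail.
rewrite integral_expR_itvoc// subrr mulr0 expR0 us_s in head.
by apply: le_trans (leeD tail head) _; rewrite -EFinM -EFinD lee_fin; lra.
Qed.

End exponential_integrals.

Lemma gt0_ereal_inf_lbound {R : realType} (T : Type) (f : T -> \bar R) :
  (0 < ereal_inf (range f))%E -> exists2 m : R, 0 < m & forall y, (m%:E <= f y)%E.
Proof.
have inf_le y : (ereal_inf (range f) <= f y)%E by apply: ereal_inf_lbound; exists y.
case: (ereal_inf _) inf_le => [r| |] inf_le // r0.
- by exists r.
- by exists 1 => // y; apply: le_trans (inf_le y); rewrite leey.
Qed.

Lemma ereal_sup_range_eq_invD {R : realType} (T : Type) (f : T -> \bar R)
    (l B c : R) (x0 : T) :
  0 < c -> B < l^-1 -> (forall x, (f x <= B%:E)%E) -> (c%:E <= f x0)%E ->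
  exists2 d : R, 0 < d & ereal_sup (range f) = ((l + d)^-1)%:E.
Proof.
move=> c0 Bl fB cf.
have supB : (ereal_sup (range f) <= B%:E)%E by apply: ge_ereal_sup => _ [x _ <-].
have supc : (c%:E <= ereal_sup (range f))%E.
  by apply: le_trans cf _; apply: ereal_sup_ubound; exists x0.
case: (ereal_sup _) supB supc => [s| |] //; rewrite !lee_fin => sB cs.
have s0 : 0 < s by apply: lt_le_trans cs.
have l0 : 0 < l^-1 by apply: lt_trans Bl; exact: lt_le_trans sB.
exists (s^-1 - l); last by rewrite addrC subrK invrK.
by rewrite subr_gt0 -[l]invrK ltf_pV2 ?posrE//; exact: le_lt_trans Bl.
Qed.

Section kernel_bounds.
Context {R : realType}.
Notation mu := (@lebesgue_measure R).
Variables (q : R -> R) (lam : R).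
Hypotheses (q_ge0 : forall x, 0 <= q x) (q_loc : locally_integrable setT q)
  (lam_gt0 : 0 < lam).

Local Notation Q x t := (Rintegral mu `[x, t] (fun xi => q xi + lam)).

Lemma Q_le (a b c d : R) : c <= a -> b <= d -> Q a b <= Q c d.
Proof.
apply: ge0_subset_Rintegral_itvcc.
- by move=> x; rewrite addr_ge0// ltW.
- exact: (locally_integrableD q_loc (locally_integrable_cst lam)).
Qed.

Lemma expRNQE (x t : R) : x <= t ->
  expR (- Q x t) = expR (- Rintegral mu `[x, t] q) * expR (- lam * (t - x)).
Proof. by move=> xt; rewrite Rintegral_itvcc_addr// -expRD mulNr opprD. Qed.

Lemma expRNQ_le (m x t : R) : m <= Rintegral mu `[x, t] q -> x <= t ->
  expR (- Q x t) <= expR (- m) * expR (- lam * (t - x)).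
Proof.
by move=> mq xt; rewrite expRNQE// ler_wpM2r ?expR_ge0// ler_expR lerN2.
Qed.

Lemma measurable_expRNQr (x : R) (D : set R) : measurable D ->
  measurable_fun D (fun t => expR (- Q x t)).
Proof.
move=> mD; apply: nonincreasing_measurable => // t1 t2 t12.
by rewrite ler_expR lerN2; apply: Q_le.
Qed.

Lemma measurable_expRNQl (x : R) (D : set R) : measurable D ->
  measurable_fun D (fun t => expR (- Q t x)).
Proof.
move=> mD; apply: nondecreasing_measurable => // t1 t2 t12.
by rewrite ler_expR lerN2; apply: Q_le.
Qed.

Lemma I1_le (x s m : R) : 0 <= s -> m <= Rintegral mu `[x, x + s] q ->
  (I1 q lam x <= ((1 - (1 - expR (- m)) * expR (- lam * s)) / lam)%:E)%E.
Proof.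
move=> s0 mq; apply: ge0_integral_itvcy_le_expR => //.
- exact: measurable_expRNQr.
- move=> t xt; rewrite expR_ge0/=.
  have q0 : 0 <= Rintegral mu `[x, t] q by apply: Rintegral_ge0 => y _.
  by have := expRNQ_le q0 xt; rewrite oppr0 expR0 mul1r.
- move=> t xst; apply: expRNQ_le; last by apply: le_trans xst; rewrite lerDl.
  apply: le_trans mq _; apply: ge0_subset_Rintegral_itvcc => //.
Qed.

Lemma I2_le (x s m : R) : 0 <= s -> m <= Rintegral mu `[x - s, x] q ->
  (I2 q lam x <= ((1 - (1 - expR (- m)) * expR (- lam * s)) / lam)%:E)%E.
Proof.
move=> s0 mq; apply: ge0_integral_itvNyc_le_expR => //.
- exact: measurable_expRNQl.
- move=> t tx; rewrite expR_ge0/= -opprB mulrN -mulNr.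
  have q0 : 0 <= Rintegral mu `[t, x] q by apply: Rintegral_ge0 => y _.
  by have := expRNQ_le q0 tx; rewrite oppr0 expR0 mul1r.
- move=> t txs; rewrite -opprB mulrN -mulNr; apply: expRNQ_le.
    apply: le_trans mq _; apply: ge0_subset_Rintegral_itvcc => //.
  by apply: le_trans txs _; rewrite lerBlDr lerDl.
Qed.

Lemma I1_ge (x : R) : ((expR (- Q x (x + 1)))%:E <= I1 q lam x)%E.
Proof.
have x1 : x <= x + 1 by rewrite lerDl.
apply: (@le_trans _ _ (\int[mu]_(t in `[x, (x + 1)%R]) (expR (- Q x t))%:E)%E).
  rewrite -[leLHS]mule1 -[X in (_ * X)%E](_ : mu `[x, x + 1] = 1%E); last first.
    by rewrite lebesgue_measure_itvcc// addrAC subrr add0r.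
  rewrite -integral_cst; last exact: measurable_itv.
  apply: ge0_le_integral.
  - exact: measurable_itv.
  - by move=> t _; rewrite lee_fin expR_ge0.
  - exact: measurable_cst.
  - by apply/measurable_EFinP; exact: measurable_expRNQr.
  - move=> t /=; rewrite in_itv/= lee_fin ler_expR lerN2 => /andP[_ t1].
    exact: Q_le.
apply: ge0_subset_integral.
- exact: measurable_itv.
- exact: measurable_itv.
- by apply/measurable_EFinP; exact: measurable_expRNQr.
- by move=> t _; rewrite lee_fin expR_ge0.
- by apply: subset_itvl; rewrite bnd_simp.
Qed.

Lemma I2_ge (x : R) : ((expR (- Q (x - 1) x))%:E <= I2 q lam x)%E.
Proof.
have x1 : x - 1 <= x by rewrite lerBlDr lerDl.
apply: (@le_trans _ _ (\int[mu]_(t in `[(x - 1)%R, x]) (expR (- Q t x))%:E)%E).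
  rewrite -[leLHS]mule1 -[X in (_ * X)%E](_ : mu `[x - 1, x] = 1%E); last first.
    by rewrite lebesgue_measure_itvcc// opprB addrC subrK.
  rewrite -integral_cst; last exact: measurable_itv.
  apply: ge0_le_integral.
  - exact: measurable_itv.
  - by move=> t _; rewrite lee_fin expR_ge0.
  - exact: measurable_cst.
  - by apply/measurable_EFinP; exact: measurable_expRNQl.
  - move=> t /=; rewrite in_itv/= lee_fin ler_expR lerN2 => /andP[t1 _].
    exact: Q_le.
apply: ge0_subset_integral.
- exact: measurable_itv.
- exact: measurable_itv.
- by apply/measurable_EFinP; exact: measurable_expRNQl.
- by move=> t _; rewrite lee_fin expR_ge0.
- by apply: subset_itvr; rewrite bnd_simp.
Qed.

End kernel_bounds.

Theorem lemma6p1 (R : realType) (q : R -> R)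
  (hq0 : forall x, 0 <= q x)
  (hqloc : locally_integrable setT q)
  (a : R) (ha : 0 < a)
  (hinf : (0 < ereal_inf [set (\int[@lebesgue_measure R]_(t in `[(x - a)%R, (x + a)%R]) (q t)%:E)%E
                          | x in [set: R]])%E)
  (lam : R) (hlam : 0 < lam) :
  (exists2 d1 : R, 0 < d1 &
      ereal_sup [set I1 q lam x | x in [set: R]] = ((lam + d1)^-1)%:E) /\
  (exists2 d2 : R, 0 < d2 &
      ereal_sup [set I2 q lam x | x in [set: R]] = ((lam + d2)^-1)%:E).
Proof.
have [m m0 mE] := gt0_ereal_inf_lbound hinf.
have mq y : m <= Rintegral (@lebesgue_measure R) `[y - a, y + a] q.
  rewrite /Rintegral -lee_fin fineK; first exact: mE.
  exact/integrable_fin_num/(locally_integrable_integrable_itvcc hqloc).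
have aa0 : 0 <= a + a by rewrite addr_ge0// ltW.
have gap : (1 - (1 - expR (- m)) * expR (- lam * (a + a))) / lam < lam^-1.
  have : 0 < (1 - expR (- m)) * expR (- lam * (a + a)).
    by rewrite mulr_gt0 ?expR_gt0// subr_gt0 expR_lt1 oppr_lt0.
  rewrite ltr_pdivrMr// mulVf ?gt_eqF//; lra.
split.
- apply: (ereal_sup_range_eq_invD (x0 := 0) (expR_gt0 _) gap); last exact: I1_ge.
  move=> x; apply: I1_le => //.
  by have := mq (x + a); rewrite addrK -addrA.
- apply: (ereal_sup_range_eq_invD (x0 := 0) (expR_gt0 _) gap); last exact: I2_ge.
  move=> x; apply: I2_le => //.
  by have := mq (x - a); rewrite subrK -addrA -opprD.
Qed.
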